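(* Let $G$ be a finite group and let $S$ be a set of non-identity arrows of $G$. Let $(K,H)$ be a non-identity arrow of $G$ and let $N=P(K)$. If $(K,H)\in\langle S\rangle$, then there exists a subset $S'\subseteq S_N$ such that $(K,H)\in\langle S'\rangle$ and at most one element of $S'$ is not contained in $S_{N+1}$.
   Context: For a finite group $G$, an arrow is a pair $(K,H)$ of subgroups with $K\leqslant H$; it is an identity arrow if $K=H$. A $G$-transfer system is a set of arrows containing all identity arrows and closed under composition ($(A,B),(B,C)\Rightarrow(A,C)$), conjugation ($(A,B)\Rightarrow(gAg^{-1},gBg^{-1})$ for all $g\in G$) and restriction ($(A,B)$ and $L\leqslant B\Rightarrow(A\cap L,L)$). For a set $S$ of arrows, $\langle S\rangle$ is the smallest transfer system containing $S$. For a subgroup $K$, $P(K)$ is the sum of the exponents in the prime factorization of $|K|$. For $N\in\mathbb{N}$, $S_N=\{(K,H)\in S: P(K)\geqslant N\}$. *)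

From mathcomp Require Import all_boot all_fingroup.
Set Implicit Arguments. Unset Strict Implicit. Unset Printing Implicit Defensive.
Local Open Scope group_scope.

Notation garrow gT := ({group gT} * {group gT})%type.

Definition is_arrow (gT : finGroupType) (a : garrow gT) : bool := a.1 \subset a.2.

Definition is_identity_arrow (gT : finGroupType) (a : garrow gT) : bool := a.1 == a.2.

(* G-transfer system for G = [set: gT]. *)
Definition transfer_system (gT : finGroupType) (T : {set garrow gT}) : Prop :=
  [/\ (forall a, a \in T -> is_arrow a),
      (forall H : {group gT}, (H, H) \in T),
      (forall A B C : {group gT}, (A, B) \in T -> (B, C) \in T -> (A, C) \in T),
      (forall (A B : {group gT}) (g : gT), (A, B) \in T -> ((A :^ g)%G, (B :^ g)%G) \in T)
    & (forall A B L : {group gT}, (A, B) \in T -> L \subset B -> ((A :&: L)%G, L) \in T)].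

Definition in_gen (gT : finGroupType) (S : {set garrow gT}) (a : garrow gT) : Prop :=
  forall T : {set garrow gT}, transfer_system T -> S \subset T -> a \in T.

Definition Pexp (gT : finGroupType) (K : {group gT}) : nat :=
  \sum_(p <- primes #|K|) logn p #|K|.

Definition Slev (gT : finGroupType) (S : {set garrow gT}) (N : nat) : {set garrow gT} :=
  [set a in S | N <= Pexp a.1].

(** Call an arrow (A, B) level-generated when it is generated by a subset of
    S_{P(A)} having at most one arrow outside S_{P(A)+1}; identity arrows are
    level-generated by the empty set.  Level-generated arrows form a transfer
    system containing S, hence containing <S>.  Since P counts the prime
    factors of the order with multiplicity, A < B forces P(A) < P(B); so in a
    composite (A, B), (B, C) with A < B, a witness for (B, C) lies in
    S_{P(B)}, inside S_{P(A)+1}, and adds no arrow of level exactly P(A) to a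
    witness for (A, B).  Restriction and conjugation only lower or preserve P
    of the source. *)

From mathcomp Require Import boolp.
From mathcomp Require Import all_boot all_fingroup.
Set Implicit Arguments. Unset Strict Implicit. Unset Printing Implicit Defensive.

Definition bigomega (n : nat) : nat := \sum_(p <- primes n) logn p n.

Lemma bigomega_widen n b : 0 < n -> n < b -> bigomega n = \sum_(p <- iota 0 b) logn p n.
Proof.
move=> n_gt0 lt_nb; rewrite /bigomega [RHS](bigID (mem (primes n))) /=.
rewrite [X in _ + X]big1 ?addn0; last first.
  by move=> p p'n; apply/eqP; rewrite -leqn0 leqNgt logn_gt0 (negbTE p'n).
rewrite -[RHS]big_filter; apply: perm_big; apply: uniq_perm;
  rewrite ?filter_uniq ?iota_uniq ?primes_uniq //.
move=> p; rewrite mem_filter mem_iota add0n /=.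
have [|//] := boolP (p \in primes n); rewrite mem_primes => /and3P[_ _ p_dvd_n].
by rewrite (leq_ltn_trans (dvdn_leq n_gt0 p_dvd_n) lt_nb).
Qed.

Lemma bigomegaM m n : 0 < m -> 0 < n -> bigomega (m * n) = bigomega m + bigomega n.
Proof.
move=> m_gt0 n_gt0; have mn_gt0 : 0 < m * n by rewrite muln_gt0 m_gt0.
have lt_mn : m < (m * n).+1 by rewrite ltnS leq_pmulr.
have lt_nm : n < (m * n).+1 by rewrite ltnS leq_pmull.
rewrite (bigomega_widen mn_gt0 (ltnSn _)) (bigomega_widen m_gt0 lt_mn).
by rewrite (bigomega_widen n_gt0 lt_nm) -big_split; apply: eq_bigr => p _; apply: lognM.
Qed.

Lemma bigomega_gt0 n : 1 < n -> 0 < bigomega n.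
Proof.
move=> n_gt1; have pdiv_n : pdiv n \in primes n.
  by rewrite mem_primes pdiv_prime // pdiv_dvd ltnW.
by rewrite /bigomega (big_rem _ pdiv_n) /= ltn_addr // logn_gt0.
Qed.

Lemma dvdn_bigomega d n : 0 < n -> d %| n -> bigomega d <= bigomega n.
Proof.
move=> n_gt0 /dvdnP[k def_n]; move: n_gt0; rewrite {}def_n muln_gt0 => /andP[k_gt0 d_gt0].
by rewrite bigomegaM // leq_addl.
Qed.

Lemma dvdn_bigomega_lt d n : 0 < n -> d %| n -> d < n -> bigomega d < bigomega n.
Proof.
move=> n_gt0 /dvdnP[k def_n]; move: n_gt0; rewrite {}def_n muln_gt0 => /andP[k_gt0 d_gt0].
move=> lt_d; rewrite bigomegaM // -[X in X < _]add0n ltn_add2r; apply: bigomega_gt0.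
by case: k k_gt0 lt_d => [|[|k]] //; rewrite mul1n ltnn.
Qed.

Local Open Scope group_scope.

Section Levels.
Variable gT : finGroupType.
Implicit Types (S : {set garrow gT}) (A B : {group gT}).

Lemma PexpJ A g : Pexp (A :^ g)%G = Pexp A.
Proof. by rewrite /Pexp /= cardJg. Qed.

Lemma Pexp_sub A B : A \subset B -> Pexp A <= Pexp B.
Proof. by move=> sAB; apply: dvdn_bigomega (cardG_gt0 B) (cardSg sAB). Qed.

Lemma Pexp_proper A B : A \proper B -> Pexp A < Pexp B.
Proof.
move=> ltAB; apply: dvdn_bigomega_lt (cardG_gt0 B) _ (proper_card ltAB).
by rewrite cardSg ?proper_sub.
Qed.

Lemma subset_Slev S N M : N <= M -> Slev S M \subset Slev S N.
Proof. by move=> le_NM; apply/subsetP => a; rewrite !inE => /andP[-> /(leq_trans le_NM)]. Qed.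

End Levels.

Section Generation.
Variable gT : finGroupType.
Implicit Types (S : {set garrow gT}) (A B C L : {group gT}).

Lemma in_genS S1 S2 a : S1 \subset S2 -> in_gen S1 a -> in_gen S2 a.
Proof. by move=> sS12 genS1 T tsT /(subset_trans sS12); apply: genS1. Qed.

Lemma in_gen_mem S a : a \in S -> in_gen S a.
Proof. by move=> Sa T _ /subsetP; apply. Qed.

Lemma in_gen_refl S A : in_gen S (A, A).
Proof. by move=> T [_ refl _ _ _]. Qed.

Lemma in_gen_trans S A B C : in_gen S (A, B) -> in_gen S (B, C) -> in_gen S (A, C).
Proof.
move=> genAB genBC T tsT sST; case: (tsT) => _ _ trans _ _.
exact: trans (genAB _ tsT sST) (genBC _ tsT sST).
Qed.

Lemma in_genJ S A B g : in_gen S (A, B) -> in_gen S ((A :^ g)%G, (B :^ g)%G).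
Proof.
move=> genAB T tsT sST; case: (tsT) => _ _ _ conj _.
exact: conj (genAB _ tsT sST).
Qed.

Lemma in_gen_restr S A B L : in_gen S (A, B) -> L \subset B -> in_gen S ((A :&: L)%G, L).
Proof.
move=> genAB sLB T tsT sST; case: (tsT) => _ _ _ _ restr.
exact: restr (genAB _ tsT sST) sLB.
Qed.

End Generation.

Section LevelGeneration.
Variables (gT : finGroupType) (S : {set garrow gT}).
Implicit Types (A B C L : {group gT}).

Definition level_gen A B : Prop :=
  exists S' : {set garrow gT},
    [/\ S' \subset Slev S (Pexp A), in_gen S' (A, B) & #|S' :\: Slev S (Pexp A).+1| <= 1].

Lemma level_gen_refl A : level_gen A A.
Proof. by exists set0; rewrite sub0set set0D cards0; split=> //; apply: in_gen_refl. Qed.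

Lemma level_gen_mem A B : (A, B) \in S -> level_gen A B.
Proof.
move=> S_AB; exists [set (A, B)]; split; first by rewrite sub1set inE S_AB /=.
  by apply: in_gen_mem; rewrite inE.
by rewrite (leq_trans (subset_leq_card (subsetDl _ _))) // cards1.
Qed.

Lemma level_gen_trans A B C : A \subset B -> level_gen A B -> level_gen B C -> level_gen A C.
Proof.
move=> sAB [S1 [sS1 genAB cardS1]] [S2 [sS2 genBC cardS2]].
have [->|neAB] := eqVneq A B; first by exists S2.
have sS2_up : S2 \subset Slev S (Pexp A).+1.
  by rewrite (subset_trans sS2) // subset_Slev // Pexp_proper // properEneq neAB.
exists (S1 :|: S2); split.
- by rewrite subUset sS1 (subset_trans sS2_up) ?subset_Slev.
- exact: in_gen_trans (in_genS (subsetUl _ _) genAB) (in_genS (subsetUr _ _) genBC).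
- by move: sS2_up; rewrite -setD_eq0 setDUl => /eqP ->; rewrite setU0.
Qed.

Lemma level_genJ A B g : level_gen A B -> level_gen (A :^ g)%G (B :^ g)%G.
Proof.
move=> [S' [sS' genAB cardS']]; exists S'; rewrite PexpJ; split=> //.
exact: in_genJ.
Qed.

Lemma level_gen_restr A B L : level_gen A B -> L \subset B -> level_gen (A :&: L)%G L.
Proof.
move=> [S' [sS' genAB cardS']] sLB; have le_P := Pexp_sub (subsetIl A L).
exists S'; split; first by rewrite (subset_trans sS') ?subset_Slev.
  exact: in_gen_restr genAB sLB.
by rewrite (leq_trans _ cardS') // subset_leq_card // setDS // subset_Slev.
Qed.

Definition level_closure : {set garrow gT} :=
  [set a | is_arrow a && `[< level_gen a.1 a.2 >]].

Lemma mem_level_closure A B :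
  ((A, B) \in level_closure) = (A \subset B) && `[< level_gen A B >].
Proof. by rewrite inE. Qed.

Lemma level_closure_transfer : transfer_system level_closure.
Proof.
split=> [[A B]|A|A B C|A B g|A B L]; rewrite ?mem_level_closure.
- by case/andP.
- by rewrite subxx; apply/asboolP/level_gen_refl.
- move=> /andP[sAB /asboolP genAB] /andP[sBC /asboolP genBC].
  by rewrite (subset_trans sAB sBC); apply/asboolP; apply: level_gen_trans genBC.
- by rewrite conjSg => /andP[-> /asboolP genAB]; apply/asboolP/level_genJ.
- move=> /andP[_ /asboolP genAB] sLB.
  by rewrite subsetIr; apply/asboolP; apply: level_gen_restr sLB.
Qed.

End LevelGeneration.

Theorem lemma2p12 (gT : finGroupType) (S : {set garrow gT})
  (hS : forall a, a \in S -> is_arrow a && ~~ is_identity_arrow a)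
  (K H : {group gT}) (hKH : K \subset H) (hne : K != H) :
  in_gen S (K, H) ->
  exists S' : {set garrow gT},
    [/\ S' \subset Slev S (Pexp K),
        in_gen S' (K, H)
      & #|S' :\: Slev S (Pexp K).+1| <= 1].
Proof.
move=> genKH.
have sS_closure : S \subset level_closure S.
  apply/subsetP => -[A B] S_AB; rewrite mem_level_closure.
  case/andP: (hS _ S_AB) => sAB _.
  by apply/andP; split; [exact: sAB | apply/asboolP/level_gen_mem].
have := genKH _ (level_closure_transfer S) sS_closure.
by rewrite mem_level_closure => /andP[_ /asboolP].
Qed.
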